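(* Let $e,f\in\mathbb{N}^I$ and $d=e+f$. Then: (a) $w_{e,f}\cdot\rho-\rho=-2\rho_{f,e}$. (b) The map $\beta\mapsto -w_{f,e}\cdot\beta$ is a bijection from $\mathcal{W}_{f,e}$ onto $\mathcal{W}_{e,f}$.
   Context: Let $Q=(I,E)$ be a symmetric quiver (for all $i,j\in I$ the number of arrows $i\to j$ equals the number of arrows $j\to i$). For $d\in\mathbb{N}^I$ let $R(d)=\bigoplus_{a\in E}\mathrm{Hom}(\mathbb{C}^{d_{s(a)}},\mathbb{C}^{d_{t(a)}})$ with $G(d)=\prod_i GL(d_i)$, and let $M=\bigoplus_{i\in I,1\le j\le d_i}\mathbb{Z}\beta^i_j$ be the weight lattice of the diagonal torus. The Weyl group $\mathfrak{S}_d=\prod_{a\in I}\mathfrak{S}_{d_a}$ acts on $M$ by $w\cdot\beta^a_j=\beta^a_{w^a(j)}$ for $w=(w^a)_{a\in I}$. Positive roots are $\beta^a_i-\beta^a_j$ with $i<j$, and $\rho$ is half their sum. Let $\mathcal{W}$ be the multiset of weights of $R(d)$ (for each arrow $a:i\to j$ and $x\le d_i$, $y\le d_j$, the weight $\beta^j_y-\beta^i_x$). For $e,f\in\mathbb{N}^I$ with $e+f=d$, let $\lambda_{e,f}$ be an antidominant cocharacter of the torus of $SG(d)$ associated with the ordered partition $(e,f)$: $\langle\lambda_{e,f},\beta^a_j\rangle=x$ for $j\le e^a$ and $=y$ for $j>e^a$, with fixed reals/integers $x<y$ (normalized so that $\lambda_{e,f}$ lies in $SG(d)$); define $\lambda_{f,e}$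 similarly with the blocks of sizes $f^a$ then $e^a$. Let $\mathcal{W}_{e,f}:=\{\beta\in\mathcal{W}:\langle\lambda_{e,f},\beta\rangle<0\}$ and let $\rho_{e,f}$ be half the sum of the positive roots $\alpha$ with $\langle\lambda_{e,f},\alpha\rangle<0$ (similarly $\mathcal{W}_{f,e}$, $\rho_{f,e}$). Let $w_{e,f}=(w^a)_{a\in I}\in\mathfrak{S}_d$ with $w^a(i)=i+f^a$ for $1\le i\le e^a$ and $w^a(i)=i-e^a$ for $e^a<i\le e^a+f^a$; $w_{f,e}$ is defined with the roles of $e,f$ exchanged (so $w_{f,e}=w_{e,f}^{-1}$). *)

From HB Require Import structures.
From mathcomp Require Import all_boot all_order all_fingroup all_algebra.
From mathcomp Require Import zify.
Set Implicit Arguments. Unset Strict Implicit. Unset Printing Implicit Defensive.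
Import Order.TTheory GRing.Theory Num.Theory.
Local Open Scope ring_scope.

Section Weights.
Variables (I : finType) (d : I -> nat).

(** Index set of the basis beta^a_j of the weight lattice M (0-based: j < d a). *)
Definition idx : finType := {a : I & 'I_(d a)}.

(** Weights (elements of M (x) Q) : rational coordinates on the basis beta^a_j. *)
Definition wt := {ffun idx -> rat}.

Definition beta (a : I) (j : 'I_(d a)) : wt :=
  [ffun k => ((k == Tagged (fun b => 'I_(d b)) j) : nat)%:R].

(** Weyl group S_d = prod_a S_{d_a}, acting by w . beta^a_j = beta^a_{w^a(j)}. *)
Definition weyl := forall a : I, {perm 'I_(d a)}.

Definition wact (w : weyl) (m : wt) : wt :=
  [ffun k => m (Tagged (fun b => 'I_(d b)) ((w (tag k))^-1%g (tagged k)))].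

Definition pairing (l m : wt) : rat := \sum_k l k * m k.

Definition rho_sub (P : wt -> bool) : wt :=
  [ffun k => 2^-1 * (\sum_(a : I) \sum_(i : 'I_(d a))
       \sum_(j : 'I_(d a) | (i < j)%N && P (beta i - beta j)) (beta i - beta j)) k].

Definition rho : wt := rho_sub (fun _ => true).

Definition rho_lam (l : wt) : wt := rho_sub (fun al => pairing l al < 0).

Definition cochar (e : I -> nat) (x y : rat) : wt :=
  [ffun k : idx => if (tagged k < e (tag k))%N then x else y].

Definition in_SG (l : wt) : Prop := \sum_k l k = 0.

(** Multiset of weights of R(d) for a quiver with arrow set Ar, source s, target t:
    for each arrow a : i -> j and x < d_i, y < d_j, the weight beta^j_y - beta^i_x. *)
Definition weights (Ar : finType) (s t : Ar -> I) : seq wt :=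
  flatten [seq [seq beta y - beta x | x <- enum 'I_(d (s a)), y <- enum 'I_(d (t a))]
          | a <- enum Ar].

Definition weights_lam (Ar : finType) (s t : Ar -> I) (l : wt) : seq wt :=
  [seq b <- weights s t | pairing l b < 0].

End Weights.

Definition symmetric_quiver (I Ar : finType) (s t : Ar -> I) : Prop :=
  forall i j : I, #|[pred a | (s a == i) && (t a == j)]| = #|[pred a | (s a == j) && (t a == i)]|.

Definition wfun (e f i : nat) : nat := if (i < e)%N then (i + f)%N else (i - e)%N.

Lemma wfun_lt e f i : (i < e + f)%N -> (wfun e f i < e + f)%N.
Proof. rewrite /wfun; case: ifP => ? ?; lia. Qed.

Definition word (e f n : nat) (i : 'I_n) : 'I_n := insubd i (wfun e f i).

Lemma word_inj e f n (H : (e + f)%N = n) : injective (@word e f n).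
Proof.
subst n => i j; rewrite /word => /(congr1 val).
rewrite !val_insubd !wfun_lt ?ltn_ord // => Hij; apply/val_inj => /=.
have := ltn_ord i; have := ltn_ord j; move: Hij; rewrite /wfun.
by case: ifP; case: ifP; lia.
Qed.

Definition wperm (e f n : nat) (H : (e + f)%N = n) : {perm 'I_n} := perm (word_inj H).

Definition dsum (I : finType) (e f : I -> nat) : I -> nat := fun a => (e a + f a)%N.

Definition w_ef (I : finType) (e f : I -> nat) : weyl (dsum e f) :=
  fun a => wperm (erefl (e a + f a)%N).
Definition w_fe (I : finType) (e f : I -> nat) : weyl (dsum e f) :=
  fun a => wperm (addnC (f a) (e a)).

From HB Require Import structures.
From mathcomp Require Import all_boot all_order all_fingroup all_algebra.
From mathcomp Require Import zify lra.
Set Implicit Arguments. Unset Strict Implicit. Unset Printing Implicit Defensive.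
Import Order.TTheory GRing.Theory Num.Theory.
Local Open Scope ring_scope.

(* Everything is computed coordinatewise. The beta^a_j-coordinate of a half sum of positive
   roots is half the number of those roots beta^a_j - beta^a_k (k > j) minus the number of those
   roots beta^a_i - beta^a_j (i < j). For rho this is (d_a - 1)/2 - j; for rho_{f,e} it is e_a/2
   on the first block (j < f_a) and -f_a/2 on the second. Since w_{e,f}^-1 shifts the first block
   up by e_a and the second down by f_a, part (a) follows.
   For (b), beta^t_y - beta^s_x (an arrow s -> t) is lambda_{f,e}-negative iff y < f_t and
   x >= f_s; -w_{f,e} sends it to beta^s_{w x} - beta^t_{w y}, which is exactly a
   lambda_{e,f}-negative weight of an arrow t -> s, and w is a bijection of index pairs.
   Summing over arrows, the symmetry of the quiver matches arrows s -> t with arrows t -> s. *)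

Lemma ffunBE (aT : finType) (rT : zmodType) (f g : {ffun aT -> rT}) x :
  (f - g) x = f x - g x.
Proof. by rewrite !ffunE. Qed.

Lemma card_ord_range n (P : pred 'I_n) lo hi :
  (lo <= hi)%N -> (forall i : 'I_n, P i = (lo <= i < hi)%N) ->
  #|P| = (minn hi n - minn lo n)%N.
Proof.
move=> le_lo_hi Pi; rewrite (eq_card (B := [pred i : 'I_n | lo <= i < hi]%N)) //.
rewrite -sum1_card; elim: n {P Pi} => [|n IHn]; first by rewrite big_ord0; lia.
by rewrite big_mkcond big_ord_recr /= -big_mkcond IHn inE /=; case: ifP; lia.
Qed.

Lemma sum_delta_pairs (R : pzRingType) n (C : rel 'I_n) j :
  \sum_i \sum_(k | C i k) (((j == i)%:R : R) - (j == k)%:R)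
  = #|[pred k | C j k]|%:R - #|[pred i | C i j]|%:R.
Proof.
under eq_bigr => i _ do rewrite sumrB.
rewrite sumrB -!sum1_card !natr_sum; congr (_ - _).
  rewrite (bigD1 j) //= [X in _ + X]big1 ?addr0 => [|i /negbTE neq_ij].
    by apply: eq_bigr => k _; rewrite eqxx.
  by apply: big1 => k _; rewrite eq_sym neq_ij.
under [LHS]eq_bigr => i _ do rewrite big_mkcond.
rewrite exchange_big (bigD1 j) //= [X in _ + X]big1 ?addr0 => [|k /negbTE neq_kj].
  by rewrite [RHS]big_mkcond; apply: eq_bigr => i _; rewrite eqxx; case: ifP.
by apply: big1 => i _; rewrite eq_sym neq_kj if_same.
Qed.

Section Coordinates.
Variables (I : finType) (d : I -> nat).
Local Notation ix j := (Tagged (fun b => 'I_(d b)) j).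

Lemma eq_ix_tag a c (i : 'I_(d a)) (j : 'I_(d c)) : a != c -> (ix i == ix j) = false.
Proof. by apply: contraNF => /eqP/(congr1 tag)/eqP. Qed.

Lemma beta_ix a (i j : 'I_(d a)) : beta i (ix j) = (j == i)%:R.
Proof. by rewrite ffunE eq_Tagged. Qed.

Lemma beta_ix_tag a c (i : 'I_(d a)) (j : 'I_(d c)) : c != a -> beta i (ix j) = 0.
Proof. by move=> neq_ca; rewrite ffunE eq_ix_tag. Qed.

Lemma pairing_beta (l : wt d) a (i : 'I_(d a)) : pairing l (beta i) = l (ix i).
Proof.
rewrite /pairing (bigD1 (ix i)) //= ffunE eqxx mulr1 big1 ?addr0 // => k /negbTE neq_ki.
by rewrite ffunE neq_ki mulr0.
Qed.

Lemma pairingB (l m1 m2 : wt d) : pairing l (m1 - m2) = pairing l m1 - pairing l m2.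
Proof. by rewrite /pairing -sumrB; apply: eq_bigr => k _; rewrite !ffunE mulrBr. Qed.

Lemma pairing_cochar_root_lt0 (e : I -> nat) x y a c (i : 'I_(d a)) (j : 'I_(d c)) :
  x < y -> (pairing (cochar d e x y) (beta i - beta j) < 0) = (i < e a)%N && (e c <= j)%N.
Proof.
move=> lt_xy; rewrite pairingB !pairing_beta !ffunE /= subr_lt0.
by case: ltnP => _; case: ltnP => _; rewrite ?ltxx ?lt_xy // ltNge ltW.
Qed.

Lemma wactE (w : weyl d) (m : wt d) a (j : 'I_(d a)) :
  wact w m (ix j) = m (ix ((w a)^-1%g j)).
Proof. by rewrite ffunE. Qed.

Lemma wactB (w : weyl d) (m1 m2 : wt d) : wact w (m1 - m2) = wact w m1 - wact w m2.
Proof. by apply/ffunP => k; rewrite !ffunE. Qed.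

Lemma wact_beta (w : weyl d) a (i : 'I_(d a)) : wact w (beta i) = beta (w a i).
Proof.
apply/ffunP => -[c j]; rewrite !ffunE /=; move: j; have [<-|neq_ac] := eqVneq a c => j.
  by rewrite !eq_Tagged -(inj_eq (@perm_inj _ (w a))) permKV eq_sym.
by rewrite !eq_ix_tag // eq_sym.
Qed.

Lemma rho_subE (P : pred (wt d)) a (j : 'I_(d a)) :
  rho_sub P (ix j) = 2^-1 * (#|[pred k : 'I_(d a) | (j < k)%N && P (beta j - beta k)]|%:R
                            - #|[pred i : 'I_(d a) | (i < j)%N && P (beta i - beta j)]|%:R).
Proof.
rewrite ffunE sum_ffunE (bigD1 a) //= [X in _ + X]big1 ?addr0 => [|c neq_ca]; last first.
  rewrite sum_ffunE big1 // => i _; rewrite sum_ffunE big1 // => k _.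
  by rewrite ffunBE !beta_ix_tag ?subrr // eq_sym.
congr (_ * _); rewrite sum_ffunE.
rewrite -(sum_delta_pairs _ (fun i k => (i < k)%N && P (beta i - beta k))).
apply: eq_bigr => i _; rewrite sum_ffunE.
by apply: eq_bigr => k _; rewrite ffunBE !beta_ix.
Qed.

Lemma rhoE a (i : 'I_(d a)) : rho d (ix i) = ((d a)%:R - 1) / 2 - i%:R.
Proof.
have lt_i := ltn_ord i.
rewrite rho_subE (card_ord_range (lo := i.+1) (hi := d a)) // => [|k /=]; last first.
  by rewrite andbT ltn_ord andbT.
rewrite (card_ord_range (lo := 0) (hi := i)) // => [|k /=]; last by rewrite andbT.
rewrite minnn (minn_idPl (ltnW lt_i)) (minn_idPl lt_i) min0n subn0.
by rewrite natrB // -(addn1 i) natrD; lra.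
Qed.

Lemma rho_lamE (f : I -> nat) x y a (i : 'I_(d a)) : x < y -> (f a <= d a)%N ->
  rho_lam (cochar d f x y) (ix i)
  = 2^-1 * (if (i < f a)%N then (d a - f a)%:R else - (f a)%:R).
Proof.
move=> lt_xy le_fd; rewrite rho_subE.
have [lt_if|le_fi] := ltnP i (f a).
- rewrite (card_ord_range (lo := f a) (hi := d a)) // => [|k /=]; last first.
    by rewrite pairing_cochar_root_lt0 // lt_if ltn_ord andbT; lia.
  rewrite (card_ord_range (lo := 0) (hi := 0)) // => [|k /=]; last first.
    by rewrite pairing_cochar_root_lt0 //; lia.
  by rewrite minnn (minn_idPl le_fd) subnn subr0.
- rewrite (card_ord_range (lo := 0) (hi := 0)) // => [|k /=]; last first.
    by rewrite pairing_cochar_root_lt0 //; lia.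
  rewrite (card_ord_range (lo := 0) (hi := f a)) // => [|k /=]; last first.
    by rewrite pairing_cochar_root_lt0 //; have := ltn_ord k; lia.
  by rewrite (minn_idPl le_fd) min0n subnn subn0 sub0r.
Qed.

End Coordinates.

Lemma wperm_val e f n (H : (e + f)%N = n) (i : 'I_n) : wperm H i = wfun e f i :> nat.
Proof. by subst n; rewrite permE /word val_insubd wfun_lt. Qed.

Lemma wpermV_val e f n (H : (e + f)%N = n) (j : 'I_n) :
  (wperm H)^-1%g j = wfun f e j :> nat.
Proof.
have := congr1 (@nat_of_ord n) (permKV (wperm H) j); rewrite wperm_val /wfun.
have := ltn_ord j; move: ((wperm H)^-1%g j) => i lt_j.
by case: (ltnP i e); case: (ltnP j f); have := ltn_ord i; lia.
Qed.

Lemma wact_w_ef_rho (I : finType) (e f : I -> nat) x y : x < y ->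
  wact (w_ef e f) (rho (dsum e f)) - rho (dsum e f)
  = [ffun k => - 2 * rho_lam (cochar (dsum e f) f x y) k].
Proof.
move=> lt_xy; apply/ffunP => -[a j].
change (existT _ a j) with (Tagged (fun b => 'I_(dsum e f b)) j).
rewrite ffunBE wactE [RHS]ffunE rho_lamE ?leq_addl // !rhoE wpermV_val /wfun /dsum.
have lt_j := ltn_ord j; rewrite /dsum in lt_j.
case: ltnP => [_|le_fj]; first by rewrite natrD addnK; lra.
by rewrite natrB //; lra.
Qed.

Lemma count_allpairs (S T R : Type) (F : S -> T -> R) s t (r : pred R) :
  count r [seq F x y | x <- s, y <- t] = (\sum_(x <- s) \sum_(y <- t | r (F x y)) 1)%N.
Proof.
by elim: s => [|x s IHs]; rewrite ?big_nil //= big_cons count_cat IHs count_map -sum1_count.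
Qed.

Lemma sum_arrows_reverse (I Ar : finType) (s t : Ar -> I) (R : nmodType) (F : I -> I -> R) :
  symmetric_quiver s t -> \sum_a F (s a) (t a) = \sum_a F (t a) (s a).
Proof.
move=> sym_st.
have split_arrows (G : Ar -> R) :
    \sum_a G a = \sum_i \sum_j \sum_(a | (s a == i) && (t a == j)) G a.
  rewrite (partition_big s predT) //; apply: eq_bigr => i _.
  by rewrite (partition_big t predT) //; apply: eq_bigr => j _; apply: eq_bigl => a.
rewrite !split_arrows [RHS]exchange_big; apply: eq_bigr => i _; apply: eq_bigr => j _.
rewrite (eq_bigr (fun=> F i j)) => [|a /andP[/eqP-> /eqP->]] //.
rewrite [RHS](eq_bigr (fun=> F i j)) => [|a /andP[/eqP-> /eqP->]] //.
by rewrite !sumr_const sym_st.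
Qed.

Section ArrowWeights.
Variables (I : finType) (d : I -> nat).

Definition arrow_weights (i j : I) : seq (wt d) :=
  [seq beta y - beta x | x <- enum 'I_(d i), y <- enum 'I_(d j)].

Lemma weightsE (Ar : finType) (s t : Ar -> I) :
  weights d s t = flatten [seq arrow_weights (s a) (t a) | a <- enum Ar].
Proof. by []. Qed.

Lemma count_arrow_weights (q : pred (wt d)) i j :
  count q (arrow_weights i j)
  = (\sum_(x : 'I_(d i)) \sum_(y : 'I_(d j) | q (beta y - beta x)%R) 1)%N.
Proof. by rewrite count_allpairs !enumT. Qed.

End ArrowWeights.

Section Reflection.
Variables (I : finType) (e f : I -> nat) (x1 y1 x2 y2 : rat).
Hypotheses (lt_xy1 : x1 < y1) (lt_xy2 : x2 < y2).
Local Notation d := (dsum e f).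
Local Notation lambda_ef := (cochar d e x1 y1).
Local Notation lambda_fe := (cochar d f x2 y2).

Lemma pairing_cochar_w_fe i j (x : 'I_(d i)) (y : 'I_(d j)) :
  (pairing lambda_ef (beta (w_fe e f i x) - beta (w_fe e f j y)) < 0)
  = (pairing lambda_fe (beta y - beta x) < 0).
Proof.
rewrite !pairing_cochar_root_lt0 // !wperm_val /wfun.
case: x => x lt_x; case: y => y lt_y /=; rewrite /dsum in lt_x lt_y.
by case: (ltnP x (f i)); case: (ltnP y (f j)); lia.
Qed.

Lemma perm_eq_arrow_weights_lam i j :
  perm_eq [seq - wact (w_fe e f) b
          | b <- [seq b <- arrow_weights d i j | pairing lambda_fe b < 0]]
          [seq b <- arrow_weights d j i | pairing lambda_ef b < 0].
Proof.
apply/seq.permP => q; rewrite count_map !count_filter !count_arrow_weights.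
rewrite [RHS](reindex_inj (@perm_inj _ (w_fe e f j))).
under [RHS]eq_bigr => y _ do rewrite (reindex_inj (@perm_inj _ (w_fe e f i))).
rewrite (exchange_big_dep predT) //; apply: eq_bigr => x _; apply: eq_bigl => y /=.
by rewrite wactB !wact_beta opprB pairing_cochar_w_fe andbC.
Qed.

Lemma perm_eq_weights_lam (Ar : finType) (s t : Ar -> I) : symmetric_quiver s t ->
  perm_eq [seq - wact (w_fe e f) b | b <- weights_lam s t lambda_fe] (weights_lam s t lambda_ef).
Proof.
move=> sym_st; apply/seq.permP => q.
rewrite /weights_lam weightsE !filter_flatten map_flatten !count_flatten !sumnE !big_map.
under eq_bigr => a _ do rewrite (seq.permP (perm_eq_arrow_weights_lam _ _)).
exact: (sum_arrows_reverse (fun i j => count q [seq b <- arrow_weights d j i | _])).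
Qed.

End Reflection.

Theorem proposition4p4 (I Ar : finType) (s t : Ar -> I) (e f : I -> nat)
    (x1 y1 x2 y2 : rat) :
  symmetric_quiver s t ->
  x1 < y1 -> in_SG (cochar (dsum e f) e x1 y1) ->
  x2 < y2 -> in_SG (cochar (dsum e f) f x2 y2) ->
  wact (w_ef e f) (rho (dsum e f)) - rho (dsum e f)
    = [ffun k => - 2 * rho_lam (cochar (dsum e f) f x2 y2) k]
  /\ perm_eq [seq - wact (w_fe e f) b | b <- weights_lam s t (cochar (dsum e f) f x2 y2)]
             (weights_lam s t (cochar (dsum e f) e x1 y1)).
Proof.
move=> sym_st lt_xy1 _ lt_xy2 _; split; first exact: wact_w_ef_rho.
exact: perm_eq_weights_lam.
Qed.
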